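(* Let $M$ and $M+H$ be $n\times n$ real symmetric matrices, each of whose eigenvalues have pairwise distinct absolute values. Let $\lambda_1,\dots,\lambda_n$ be the spectrum of $M$ with $|\lambda_1|>\dots>|\lambda_n|$, and $\nu_1,\dots,\nu_n$ the spectrum of $M+H$ with $|\nu_1|>\dots>|\nu_n|$. For each $i$ let $u_i,v_i$ be eigenvectors with $Mu_i=\lambda_iu_i$ and $(M+H)v_i=\nu_iv_i$, and let $\theta_i$ be the angle between the lines spanned by $u_i$ and $v_i$. Let $\varepsilon:=\|H\|$ be the spectral norm of $H$. Then for all $i\in\{1,\dots,n\}$: (i) $|\lambda_i^2-\nu_i^2|\le\varepsilon(\varepsilon+2|\lambda_1|)$; (ii) $\sin\theta_i\le\varepsilon(\varepsilon+2|\lambda_1|)/\Delta_i$, where $\Delta_i=\min\{|\lambda_i^2-\nu_j^2|: j=1,\dots,n,\ j\ne i\}$.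
   Context: The spectral norm $\|H\|$ of a real symmetric matrix is the maximal absolute value of its eigenvalues. *)

From HB Require Import structures.
From mathcomp Require Import all_boot all_order all_algebra.
From mathcomp.real_closed Require Import polyrcf.
Set Implicit Arguments. Unset Strict Implicit. Unset Printing Implicit Defensive.
Import Order.TTheory GRing.Theory Num.Theory.
Local Open Scope ring_scope.

Definition dotv (R : rcfType) (n : nat) (u v : 'cV[R]_n) : R := (u^T *m v) 0 0.

(* sine of the angle theta in [0, pi/2] between the lines spanned by nonzero
   u and v: cos theta = |<u,v>| / (|u| |v|), sin theta = sqrt (1 - cos^2). *)
Definition sin_angle (R : rcfType) (n : nat) (u v : 'cV[R]_n) : R :=
  Num.sqrt (1 - (dotv u v) ^+ 2 / (dotv u u * dotv v v)).

(* spectral norm: maximal absolute value of the eigenvalues (real roots of the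
   characteristic polynomial; for a symmetric matrix these are all eigenvalues) *)
Definition spectral_norm (R : rcfType) (n : nat) (H : 'M[R]_n) : R :=
  \big[Num.max/0]_(x <- rootsR (char_poly H)) `|x|.

(* Delta_i = min { |lam_i^2 - nu_j^2| : j <> i }.  The neutral element of the
   min is an upper bound of all the values, so for n >= 2 this is exactly the
   minimum over j <> i. *)
Definition gap (R : rcfType) (n : nat) (lam nu : 'I_n -> R) (i : 'I_n) : R :=
  \big[Num.min/(\big[Num.max/0]_(j < n) `|lam i ^+ 2 - nu j ^+ 2|)]_(j < n | j != i)
     `|lam i ^+ 2 - nu j ^+ 2|.

From HB Require Import structures.
From mathcomp Require Import all_boot all_order all_algebra.
From mathcomp.real_closed Require Import polyrcf complex.
From mathcomp Require Import sesquilinear spectral.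
From mathcomp Require Import ring lra.
Import Order.TTheory GRing.Theory Num.Theory.
Local Open Scope ring_scope.
Set Implicit Arguments. Unset Strict Implicit. Unset Printing Implicit Defensive.

(* Squaring turns the ordering by absolute value into the usual one: lam_i^2
   and nu_i^2 are the eigenvalues of M^2 and (M + H)^2 in nonincreasing order,
   with eigenvectors u_i and v_i.  The difference E = M H + H M + H^2 of the
   squares has operator norm at most eps (eps + 2 |lam_1|), because |H x| <= eps |x|
   for symmetric H.  Part (i) is then Weyl's inequality for M^2 and (M + H)^2,
   proved by the Courant-Fischer dimension count.  Part (ii) is the Davis-Kahan
   argument: expanding u_i in the orthogonal basis (v_j), |E u_i|^2 is
   sum_j (nu_j^2 - lam_i^2)^2 <u_i, v_j>^2 / |v_j|^2, which is at least
   Delta_i^2 |u_i|^2 sin^2 theta_i. *)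

Section Dotv.
Variables (R : rcfType) (n : nat).
Implicit Types (x y : 'cV[R]_n) (A : 'M[R]_n).

Lemma dotvE x y : dotv x y = \sum_k x k 0 * y k 0.
Proof. by rewrite /dotv mxE; apply: eq_bigr => k _; rewrite mxE. Qed.

Lemma dotvC x y : dotv x y = dotv y x.
Proof. by rewrite !dotvE; apply: eq_bigr => k _; rewrite mulrC. Qed.

Lemma dotv_is_linear x : linear (dotv x : 'cV[R]_n -> R^o).
Proof. by move=> a y z; rewrite /dotv mulmxDr -scalemxAr !mxE. Qed.

HB.instance Definition _ x :=
  GRing.isLinear.Build R 'cV[R]_n R^o *:%R (dotv x) (dotv_is_linear x).

Lemma dotvZr (a : R) x y : dotv x (a *: y) = a * dotv x y.
Proof. exact: linearZ. Qed.

Lemma dotvZl (a : R) x y : dotv (a *: x) y = a * dotv x y.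
Proof. by rewrite dotvC dotvZr dotvC. Qed.

Lemma dotv_mulmx A x y : dotv x (A *m y) = dotv (A^T *m x) y.
Proof. by rewrite /dotv trmx_mul trmxK mulmxA. Qed.

Lemma dotv_sym A x y : A^T = A -> dotv x (A *m y) = dotv (A *m x) y.
Proof. by move=> sA; rewrite dotv_mulmx sA. Qed.

Lemma dotv_ge0 x : 0 <= dotv x x.
Proof. by rewrite dotvE sumr_ge0 // => k _; rewrite -expr2 sqr_ge0. Qed.

Lemma dotv_eq0 x : (dotv x x == 0) = (x == 0).
Proof.
apply/idP/eqP => [|->]; last by rewrite raddf0.
rewrite dotvE psumr_eq0 => [/allP x0|k _]; last by rewrite -expr2 sqr_ge0.
apply/matrixP => k j; rewrite ord1 mxE.
by have /implyP/(_ isT) := x0 k (mem_index_enum k); rewrite mulf_eq0 orbb => /eqP.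
Qed.

Lemma dotv_gt0 x : x != 0 -> 0 < dotv x x.
Proof. by rewrite lt_def dotv_ge0 dotv_eq0 => ->. Qed.

Lemma dotv_CauchySchwarz x y : dotv x y ^+ 2 <= dotv x x * dotv y y.
Proof.
have [->|x0] := eqVneq x 0; first by rewrite dotvC !raddf0 expr0n mul0r.
set a := dotv x x; set b := dotv x y; set c := dotv y y.
have a_gt0 : 0 < a by apply: dotv_gt0.
have := dotv_ge0 (b *: x - a *: y).
have -> : dotv (b *: x - a *: y) (b *: x - a *: y) = a * (a * c - b ^+ 2).
  by rewrite raddfB /= !(dotvC (_ - _)) !raddfB /= !dotvZr !dotvZl (dotvC y x); ring.
by rewrite pmulr_rge0 // subr_ge0.
Qed.

End Dotv.

Lemma ler_norm_sqr (R : realDomainType) (x y : R) :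
  0 <= y -> x ^+ 2 <= y ^+ 2 -> `|x| <= y.
Proof.
by move=> y0; rewrite -real_normK ?num_real // ler_pXn2r // ?nnegrE ?normr_ge0.
Qed.

Section MxNorm.
Variables (R : rcfType) (n : nat).
Implicit Types (x : 'cV[R]_n) (A B : 'M[R]_n).

Definition mxnorm_le A (c : R) :=
  forall x, dotv (A *m x) (A *m x) <= c ^+ 2 * dotv x x.

Lemma dotv_mxnorm_le A B (a b : R) x : 0 <= a -> 0 <= b ->
  mxnorm_le A a -> mxnorm_le B b -> `|dotv (A *m x) (B *m x)| <= a * b * dotv x x.
Proof.
move=> a0 b0 nA nB; apply: ler_norm_sqr; first by rewrite !mulr_ge0 ?dotv_ge0.
apply: le_trans (dotv_CauchySchwarz _ _) _.
have -> : (a * b * dotv x x) ^+ 2 = (a ^+ 2 * dotv x x) * (b ^+ 2 * dotv x x) by ring.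
by apply: ler_pM => //; apply: dotv_ge0.
Qed.

Lemma mxnorm_leD A B (a b : R) : 0 <= a -> 0 <= b ->
  mxnorm_le A a -> mxnorm_le B b -> mxnorm_le (A + B) (a + b).
Proof.
move=> a0 b0 nA nB x; have := nA x; have := nB x.
have /ler_normlW := dotv_mxnorm_le x a0 b0 nA nB.
rewrite mulmxDl raddfD /= !(dotvC (_ + _)) !raddfD /= (dotvC (B *m x)).
lra.
Qed.

Lemma mxnorm_leM A B (a b : R) :
  mxnorm_le A a -> mxnorm_le B b -> mxnorm_le (A *m B) (a * b).
Proof.
move=> nA nB x; rewrite -mulmxA; apply: le_trans (nA _) _.
by rewrite exprMn -[_ * _ * dotv x x]mulrA; apply: ler_wpM2l; rewrite ?sqr_ge0.
Qed.

Lemma mxnorm_leN A (c : R) : mxnorm_le A c -> mxnorm_le (- A) c.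
Proof. by move=> nA x; rewrite mulNmx raddfN /= dotvC raddfN opprK; apply: nA. Qed.

Lemma quad_mxnorm_le A (c : R) x :
  0 <= c -> mxnorm_le A c -> `|dotv x (A *m x)| <= c * dotv x x.
Proof.
move=> c0 nA; apply: ler_norm_sqr; first by rewrite mulr_ge0 ?dotv_ge0.
apply: le_trans (dotv_CauchySchwarz _ _) _.
have -> : (c * dotv x x) ^+ 2 = dotv x x * (c ^+ 2 * dotv x x) by ring.
by apply: ler_wpM2l; rewrite ?dotv_ge0.
Qed.

Lemma mxnorm_le_sqrD (M H : 'M[R]_n) (r e : R) : 0 <= r -> 0 <= e ->
  mxnorm_le M r -> mxnorm_le H e ->
  mxnorm_le ((M + H) *m (M + H) - M *m M) (e * (e + 2 * r)).
Proof.
move=> r0 e0 nM nH.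
have -> : (M + H) *m (M + H) - M *m M = M *m H + H *m M + H *m H.
  by rewrite mulmxDl !mulmxDr addrAC [M *m M + _]addrC addrK addrA.
have -> : e * (e + 2 * r) = r * e + e * r + e * e by ring.
apply: mxnorm_leD; rewrite ?addr_ge0 ?mulr_ge0 //; last exact: mxnorm_leM.
by apply: mxnorm_leD; rewrite ?mulr_ge0 //; apply: mxnorm_leM.
Qed.

End MxNorm.

Section OrthoBasis.
Variables (R : rcfType) (n : nat) (p : 'I_n -> 'cV[R]_n).
Hypothesis p_neq0 : forall j, p j != 0.
Hypothesis p_ortho : forall j k, j != k -> dotv (p j) (p k) = 0.

Lemma dotv_ortho_sum (w : 'I_n -> R) k :
  dotv (p k) (\sum_j w j *: p j) = w k * dotv (p k) (p k).
Proof.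
rewrite raddf_sum (bigD1 k) //= big1 ?addr0 ?dotvZr // => j jk.
by rewrite dotvZr p_ortho 1?eq_sym // mulr0.
Qed.

Lemma ortho_span y : exists w : 'I_n -> R, y = \sum_j w j *: p j.
Proof.
pose P : 'M[R]_n := \matrix_(j, k) p j k 0.
have combE (w : 'rV_n) : (w *m P)^T = \sum_j w 0 j *: p j.
  apply/matrixP => k i; rewrite ord1 summxE !mxE.
  by apply: eq_bigr => j _; rewrite !mxE.
have P_free : row_free P.
  apply/inj_row_free => w wP0; apply/rowP => k; rewrite mxE.
  have := dotv_ortho_sum (w 0) k; rewrite -combE wP0 trmx0 raddf0 => /esym/eqP.
  by rewrite mulf_eq0 dotv_eq0 (negbTE (p_neq0 k)) orbF => /eqP.
have /submxP [w yE] : (y^T <= P)%MS.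
  by rewrite submx_full // row_full_unit -row_free_unit.
by exists (w 0); rewrite -combE -yE trmxK.
Qed.

Lemma ortho_expansion y : y = \sum_j (dotv (p j) y / dotv (p j) (p j)) *: p j.
Proof.
have [w ->] := ortho_span y; apply: eq_bigr => j _; congr (_ *: _).
by rewrite dotv_ortho_sum mulfK // dotv_eq0.
Qed.

Lemma ortho_parseval x y :
  dotv x y = \sum_j dotv (p j) x * dotv (p j) y / dotv (p j) (p j).
Proof.
rewrite {1}(ortho_expansion x) dotvC raddf_sum /=; apply: eq_bigr => j _.
by rewrite dotvZr (dotvC y) mulrAC.
Qed.

Definition projsq j x := dotv (p j) x ^+ 2 / dotv (p j) (p j).

Lemma projsq_ge0 j x : 0 <= projsq j x.
Proof. by rewrite divr_ge0 ?sqr_ge0 ?dotv_ge0. Qed.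

Lemma dotv_projsq x : dotv x x = \sum_j projsq j x.
Proof. by rewrite ortho_parseval; apply: eq_bigr => j _; rewrite /projsq expr2. Qed.

Variables (S : 'M[R]_n) (l : 'I_n -> R).
Hypothesis S_sym : S^T = S.
Hypothesis S_eig : forall j, S *m p j = l j *: p j.

Lemma dotv_eigvec j x : dotv (p j) (S *m x) = l j * dotv (p j) x.
Proof. by rewrite dotv_sym // S_eig dotvZl. Qed.

Lemma quad_eig_projsq x : dotv x (S *m x) = \sum_j l j * projsq j x.
Proof.
by rewrite ortho_parseval; apply: eq_bigr => j _; rewrite dotv_eigvec /projsq; ring.
Qed.

Lemma dotv_eig_projsq x : dotv (S *m x) (S *m x) = \sum_j l j ^+ 2 * projsq j x.
Proof.
by rewrite ortho_parseval; apply: eq_bigr => j _; rewrite dotv_eigvec /projsq; ring.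
Qed.

Lemma projsq_eq0 j x : dotv (p j) x = 0 -> projsq j x = 0.
Proof. by rewrite /projsq => ->; rewrite expr0n mul0r. Qed.

Lemma quad_eig_le x (t : R) : (forall j, dotv (p j) x != 0 -> l j <= t) ->
  dotv x (S *m x) <= t * dotv x x.
Proof.
move=> l_le; rewrite quad_eig_projsq dotv_projsq mulr_sumr; apply: ler_sum => j _.
have [/projsq_eq0 ->|/l_le ?] := eqVneq (dotv (p j) x) 0; first by rewrite !mulr0.
by rewrite ler_wpM2r ?projsq_ge0.
Qed.

Lemma quad_eig_ge x (t : R) : (forall j, dotv (p j) x != 0 -> t <= l j) ->
  t * dotv x x <= dotv x (S *m x).
Proof.
move=> l_ge; rewrite quad_eig_projsq dotv_projsq mulr_sumr; apply: ler_sum => j _.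
have [/projsq_eq0 ->|/l_ge ?] := eqVneq (dotv (p j) x) 0; first by rewrite !mulr0.
by rewrite ler_wpM2r ?projsq_ge0.
Qed.

Lemma eig_mxnorm_le (c : R) : (forall j, `|l j| <= c) -> mxnorm_le S c.
Proof.
move=> lc x; rewrite dotv_eig_projsq dotv_projsq mulr_sumr; apply: ler_sum => j _.
rewrite ler_wpM2r ?projsq_ge0 // -real_normK ?num_real // ler_pXn2r ?nnegrE //.
exact: le_trans (lc j).
Qed.

End OrthoBasis.

Lemma sym_eigvec_ortho (R : rcfType) n (S : 'M[R]_n) (a b : R)
    (x y : 'cV[R]_n) :
  S^T = S -> S *m x = a *: x -> S *m y = b *: y -> a != b -> dotv x y = 0.
Proof.
move=> S_sym Sx Sy ab.
have : (a - b) * dotv x y = 0.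
  by rewrite mulrBl -dotvZl -dotvZr -Sx -Sy dotv_sym // subrr.
by move/eqP; rewrite mulf_eq0 subr_eq0 (negbTE ab) => /eqP.
Qed.

Section Weyl.
Variables (R : rcfType) (n : nat) (p q : 'I_n -> 'cV[R]_n).
Hypothesis q_neq0 : forall j, q j != 0.
Hypothesis q_ortho : forall j k, j != k -> dotv (q j) (q k) = 0.

(* The span of q_0, ..., q_i has dimension i + 1, so it meets the orthogonal
   complement of p_0, ..., p_(i-1): x is a kernel vector of their Gram matrix. *)
Lemma exists_ortho_prefix_suffix (i : 'I_n) : exists x : 'cV[R]_n,
  [/\ x != 0, forall j : 'I_n, (j < i)%N -> dotv (p j) x = 0
            & forall j : 'I_n, (i < j)%N -> dotv (q j) x = 0].
Proof.
pose up (k : 'I_i.+1) := widen_ord (ltn_ord i) k.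
pose down (k : 'I_i) := widen_ord (ltnW (ltn_ord i)) k.
pose Y : 'M[R]_(i.+1, i) := \matrix_(k, l) dotv (p (down l)) (q (up k)).
have kerY_neq0 : kermx Y != 0.
  by rewrite kermx_eq0 /row_free neq_ltn ltnS rank_leq_col.
have [r w_neq0] : exists r, row r (kermx Y) != 0.
  apply/existsP; apply: contraNT kerY_neq0 => /existsPn w0.
  by apply/eqP/row_matrixP => r; rewrite row0; apply/eqP/negPn/w0.
set w := row r _ in w_neq0.
have up_inj : injective up by move=> k1 k2 /(congr1 val) /= /val_inj.
pose x := \sum_k w 0 k *: q (up k).
have dotv_q k : dotv (q (up k)) x = w 0 k * dotv (q (up k)) (q (up k)).
  rewrite raddf_sum (bigD1 k) //= big1 ?addr0 ?dotvZr // => k' k'k.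
  by rewrite dotvZr q_ortho ?mulr0 // (inj_eq up_inj) eq_sym.
exists x; split.
- apply: contraNneq w_neq0 => x0; apply/eqP/rowP => k; rewrite [RHS]mxE.
  have /eqP := dotv_q k; rewrite x0 raddf0 eq_sym mulf_eq0 dotv_eq0.
  by rewrite (negbTE (q_neq0 _)) orbF => /eqP.
- move=> j ji; have -> : j = down (Ordinal ji) by apply: val_inj.
  transitivity ((w *m Y) 0 (Ordinal ji)).
    by rewrite mxE raddf_sum /=; apply: eq_bigr => k _; rewrite dotvZr /Y !mxE.
  by rewrite -row_mul mulmx_ker row0 mxE.
- move=> j ij; rewrite raddf_sum big1 // => k _ /=.
  rewrite dotvZr q_ortho ?mulr0 //.
  by apply: contraTneq ij => ->; rewrite -leqNgt; apply: ltn_ord k.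
Qed.

Variables (S T : 'M[R]_n) (a b : 'I_n -> R) (c : R).
Hypothesis p_neq0 : forall j, p j != 0.
Hypothesis p_ortho : forall j k, j != k -> dotv (p j) (p k) = 0.
Hypotheses (S_sym : S^T = S) (T_sym : T^T = T).
Hypothesis S_eig : forall j, S *m p j = a j *: p j.
Hypothesis T_eig : forall j, T *m q j = b j *: q j.
Hypothesis a_noninc : forall j k : 'I_n, (j <= k)%N -> a k <= a j.
Hypothesis b_noninc : forall j k : 'I_n, (j <= k)%N -> b k <= b j.
Hypotheses (c_ge0 : 0 <= c) (TS_norm : mxnorm_le (T - S) c).

Lemma weyl_eig_le i : b i <= a i + c.
Proof.
have [x [x_neq0 px0 qx0]] := exists_ortho_prefix_suffix i.
have Sx : dotv x (S *m x) <= a i * dotv x x.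
  apply: (quad_eig_le p_neq0 p_ortho S_sym S_eig) => j.
  by have [/px0 ->|/a_noninc //] := ltnP j i; rewrite eqxx.
have Tx : b i * dotv x x <= dotv x (T *m x).
  apply: (quad_eig_ge q_neq0 q_ortho T_sym T_eig) => j.
  by have [/qx0 ->|/b_noninc //] := ltnP i j; rewrite eqxx.
have /ler_normlW := quad_mxnorm_le x c_ge0 TS_norm.
rewrite mulmxBl raddfB /= => TSx.
by rewrite -(ler_pM2r (dotv_gt0 x_neq0)) mulrDl; lra.
Qed.

End Weyl.

Section Perturbation.
Variables (R : rcfType) (n : nat) (S T : 'M[R]_n) (p q : 'I_n -> 'cV[R]_n).
Variables (a b : 'I_n -> R) (c : R).
Hypotheses (p_neq0 : forall j, p j != 0) (q_neq0 : forall j, q j != 0).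
Hypothesis p_ortho : forall j k, j != k -> dotv (p j) (p k) = 0.
Hypothesis q_ortho : forall j k, j != k -> dotv (q j) (q k) = 0.
Hypotheses (S_sym : S^T = S) (T_sym : T^T = T).
Hypothesis S_eig : forall j, S *m p j = a j *: p j.
Hypothesis T_eig : forall j, T *m q j = b j *: q j.
Hypotheses (c_ge0 : 0 <= c) (TS_norm : mxnorm_le (T - S) c).

Lemma eig_perturb_le (i : 'I_n) :
  (forall j k : 'I_n, (j <= k)%N -> a k <= a j) ->
  (forall j k : 'I_n, (j <= k)%N -> b k <= b j) ->
  `|a i - b i| <= c.
Proof.
move=> a_noninc b_noninc.
have ST_norm : mxnorm_le (S - T) c by rewrite -opprB; apply: mxnorm_leN.
have := weyl_eig_le q_neq0 q_ortho p_neq0 p_ortho S_sym T_sym S_eig T_eig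
  a_noninc b_noninc c_ge0 TS_norm i.
have := weyl_eig_le p_neq0 p_ortho q_neq0 q_ortho T_sym S_sym T_eig S_eig
  b_noninc a_noninc c_ge0 ST_norm i.
by rewrite ler_norml; lra.
Qed.

Lemma sin_angle_eig_le (i : 'I_n) (D : R) : 0 < D ->
  (forall j, j != i -> D <= `|a i - b j|) -> sin_angle (p i) (q i) <= c / D.
Proof.
move=> D_gt0 gap_le; set x := p i.
have normTSx : dotv ((T - S) *m x) ((T - S) *m x)
    = \sum_j (b j - a i) ^+ 2 * projsq q j x.
  rewrite mulmxBl S_eig (ortho_parseval q_neq0 q_ortho); apply: eq_bigr => j _.
  by rewrite raddfB /= dotvZr (dotv_eigvec T_sym T_eig) /projsq; ring.
have gapx :
    D ^+ 2 * (dotv x x - projsq q i x) <= \sum_j (b j - a i) ^+ 2 * projsq q j x.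
  rewrite (dotv_projsq q_neq0 q_ortho) (bigD1 i) //= addrAC subrr add0r.
  rewrite [leRHS](bigD1 i) //= mulr_sumr -[leLHS]add0r; apply: lerD.
    by rewrite mulr_ge0 ?sqr_ge0 ?projsq_ge0.
  apply: ler_sum => j ji; rewrite ler_wpM2r ?projsq_ge0 //.
  rewrite -(real_normK (num_real (b j - a i))).
  by rewrite ler_pXn2r ?nnegrE ?normr_ge0 ?(ltW D_gt0) // distrC gap_le.
have x_gt0 : 0 < dotv x x := dotv_gt0 (p_neq0 i).
have qi_gt0 : 0 < dotv (q i) (q i) := dotv_gt0 (q_neq0 i).
have sin2E : 1 - dotv x (q i) ^+ 2 / (dotv x x * dotv (q i) (q i))
    = (dotv x x - projsq q i x) / dotv x x.
  by rewrite /projsq dotvC; field; rewrite !gt_eqF.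
have cD_ge0 : 0 <= c / D by rewrite divr_ge0 // ltW.
rewrite /sin_angle sin2E -(ger0_norm cD_ge0) -sqrtr_sqr ler_sqrt ?sqr_ge0 //.
rewrite expr_div_n ler_pdivrMr // mulrAC ler_pdivlMr ?exprn_gt0 // mulrC.
by apply: le_trans gapx _; rewrite -normTSx TS_norm.
Qed.

End Perturbation.

Section NormalBound.
Variables (C : numClosedFieldType) (n : nat).
Local Open Scope sesquilinear_scope.

Definition csqnorm (z : 'cV[C]_n) : C := (z ^t* *m z) 0 0.

Lemma csqnormE z : csqnorm z = \sum_k `|z k 0| ^+ 2.
Proof. by rewrite /csqnorm mxE; apply: eq_bigr => k _; rewrite !mxE normCKC. Qed.

Lemma csqnorm_isometry (A : 'M[C]_n) z :
  A ^t* *m A = 1%:M -> csqnorm (A *m z) = csqnorm z.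
Proof.
by move=> AA; rewrite /csqnorm trmx_mul map_mxM -mulmxA (mulmxA _ A) AA mul1mx.
Qed.

Lemma spectral_diag_eigenvalue (A : 'M[C]_n) k :
  A \is normalmx -> eigenvalue A (spectral_diag A 0 k).
Proof.
move=> /orthomx_spectralP A_diag; set P := spectralmx A.
apply/eigenvalueP; exists (row k P).
  rewrite -row_mul [in P *m A]A_diag !mulmxA mulmxV ?spectral_unit // mul1mx.
  by rewrite mul_diag_mx; apply/rowP => j; rewrite !mxE.
apply/eqP => /(congr1 (mulmx^~ (invmx P))).
rewrite -row_mul mulmxV ?spectral_unit // mul0mx => /rowP/(_ k).
by rewrite !mxE eqxx => /eqP; rewrite oner_eq0.
Qed.

Lemma normalmx_csqnorm_le (A : 'M[C]_n) (e : C) z : A \is normalmx ->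
  (forall k, `|spectral_diag A 0 k| <= e) -> csqnorm (A *m z) <= e ^+ 2 * csqnorm z.
Proof.
move=> /orthomx_spectralP A_diag d_le; set P := spectralmx A.
have P_unitary : P \is unitarymx := spectral_unitarymx A.
have PP : P ^t* ^t* *m P ^t* = 1%:M by rewrite trmxCK; apply/unitarymxP.
have PtP : P ^t* *m P = 1%:M.
  by rewrite -invmx_unitary // mulVmx ?unitarymx_unit.
rewrite A_diag invmx_unitary // -!mulmxA csqnorm_isometry //.
rewrite -(csqnorm_isometry z PtP) !csqnormE mulr_sumr; apply: ler_sum => k _.
rewrite mul_diag_mx mxE normrM exprMn ler_wpM2r ?exprn_ge0 //.
by rewrite ler_pXn2r ?nnegrE ?(le_trans _ (d_le k)).
Qed.

End NormalBound.

Section SpectralNorm.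
Variables (R : rcfType) (n : nat).
Local Open Scope complex_scope.

Lemma spectral_norm_ge0 (H : 'M[R]_n) : 0 <= spectral_norm H.
Proof.
by rewrite /spectral_norm; elim/big_rec: _ => // y s _ s_ge0; rewrite le_max s_ge0 orbT.
Qed.

Lemma root_le_spectral_norm (H : 'M[R]_n) (r : R) :
  root (char_poly H) r -> `|r| <= spectral_norm H.
Proof.
move=> Hr; have H_neq0 : char_poly H != 0 by rewrite monic_neq0 ?char_poly_monic.
have r_root : r \in rootsR (char_poly H) by rewrite -(roots_on_rootsR H_neq0) Hr andbT.
exact: (le_bigmax_seq _ _ xpredT (fun x => `|x|) r_root).
Qed.

Lemma conj_real_complex (r : R) : (r%:C)^*%R = r%:C.
Proof. by apply/conj_Creal/complex_realP; exists r. Qed.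

Lemma norm_real_complex (r : R) : `|r%:C| = `|r|%:C.
Proof. by rewrite normc_def /= expr0n addr0 sqrtr_sqr. Qed.

Lemma csqnorm_real (x : 'cV[R]_n) :
  csqnorm (map_mx (real_complex R) x) = (dotv x x)%:C.
Proof.
rewrite /csqnorm /dotv map_trmx -map_mx_comp (eq_map_mx _ conj_real_complex).
by rewrite -map_mxM mxE.
Qed.

(* Through the spectral theorem for the Hermitian complexification of H, whose
   eigenvalues are real roots of char_poly H. *)
Lemma sym_mxnorm_le_spectral_norm (H : 'M[R]_n) :
  H^T = H -> mxnorm_le H (spectral_norm H).
Proof.
move=> H_sym x; set Hc := map_mx (real_complex R) H.
have Hc_herm : Hc \is hermsymmx.
  apply/is_hermitianmxP; rewrite expr0 scale1r.
  by apply/matrixP => a b; rewrite !mxE conj_real_complex -[in LHS]H_sym mxE.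
have d_le k : `|spectral_diag Hc 0 k| <= (spectral_norm H)%:C.
  have := spectral_diag_eigenvalue k (hermitian_normalmx Hc_herm).
  have /complex_realP [r ->] : spectral_diag Hc 0 k \is Num.real.
    exact/(mxOverP (hermitian_spectral_diag_real Hc_herm)).
  rewrite eigenvalue_map eigenvalue_root_char => /root_le_spectral_norm.
  by rewrite norm_real_complex lecR.
rewrite -lecR rmorphM /= rmorphXn /= -!csqnorm_real map_mxM.
exact: normalmx_csqnorm_le (hermitian_normalmx Hc_herm) d_le.
Qed.

End SpectralNorm.

Section AbsDecreasing.
Variables (R : realDomainType) (n : nat) (f : 'I_n -> R).
Hypothesis f_dec : forall i j : 'I_n, (i < j)%N -> `|f j| < `|f i|.

Lemma abs_dec_inj j k : j != k -> f j != f k.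
Proof.
apply: contraNneq => fjk.
by have [/f_dec|/f_dec|/val_inj-> //] := ltngtP j k; rewrite fjk ltxx.
Qed.

Lemma abs_dec_le (j k : 'I_n) : (j <= k)%N -> `|f k| <= `|f j|.
Proof. by rewrite leq_eqVlt => /predU1P [/val_inj->|/f_dec/ltW]. Qed.

Lemma sqr_dec_le (j k : 'I_n) : (j <= k)%N -> f k ^+ 2 <= f j ^+ 2.
Proof.
by move=> /abs_dec_le; rewrite -ler_sqr ?nnegrE // !real_normK ?num_real.
Qed.

End AbsDecreasing.

Lemma trmx_sqr (R : comPzRingType) n (S : 'M[R]_n) : S^T = S -> (S *m S)^T = S *m S.
Proof. by move=> S_sym; rewrite trmx_mul S_sym. Qed.

Lemma mulmx_sqr_eig (R : comPzRingType) n (S : 'M[R]_n) (x : 'cV[R]_n) (a : R) :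
  S *m x = a *: x -> (S *m S) *m x = a ^+ 2 *: x.
Proof. by move=> Sx; rewrite -mulmxA Sx -scalemxAr Sx scalerA. Qed.

Theorem theorem5p9 (R : rcfType) (n : nat) (M H : 'M[R]_n)
    (lam nu : 'I_n -> R) (u v : 'I_n -> 'cV[R]_n) :
  M^T = M -> (M + H)^T = M + H ->
  (* lam is the spectrum of M, nu the spectrum of M + H (with multiplicity) *)
  char_poly M = \prod_(i < n) ('X - (lam i)%:P) ->
  char_poly (M + H) = \prod_(i < n) ('X - (nu i)%:P) ->
  (* |lam_1| > ... > |lam_n| and |nu_1| > ... > |nu_n| *)
  (forall i j : 'I_n, (i < j)%N -> `|lam j| < `|lam i|) ->
  (forall i j : 'I_n, (i < j)%N -> `|nu j| < `|nu i|) ->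
  (* eigenvectors *)
  (forall i, u i != 0 /\ M *m u i = lam i *: u i) ->
  (forall i, v i != 0 /\ (M + H) *m v i = nu i *: v i) ->
  forall i : 'I_n,
    let eps := spectral_norm H in
    let lam1 := lam (Ordinal (leq_ltn_trans (leq0n i) (ltn_ord i))) in
    `|lam i ^+ 2 - nu i ^+ 2| <= eps * (eps + 2 * `|lam1|) /\
    (0 < gap lam nu i ->
       sin_angle (u i) (v i) <= eps * (eps + 2 * `|lam1|) / gap lam nu i).
Proof.
move=> M_sym MH_sym _ _ lam_dec nu_dec u_eig v_eig i eps lam1.
have H_sym : H^T = H by apply: (addrI M); rewrite -[in LHS]M_sym -MH_sym raddfD.
have [u_neq0 Mu] := all_and2 u_eig.
have [v_neq0 MHv] := all_and2 v_eig.
have u_ortho j k (jk : j != k) : dotv (u j) (u k) = 0.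
  exact: sym_eigvec_ortho M_sym (Mu j) (Mu k) (abs_dec_inj lam_dec jk).
have v_ortho j k (jk : j != k) : dotv (v j) (v k) = 0.
  exact: sym_eigvec_ortho MH_sym (MHv j) (MHv k) (abs_dec_inj nu_dec jk).
have lam1_max j : `|lam j| <= `|lam1| by apply: (abs_dec_le lam_dec).
have M_norm : mxnorm_le M `|lam1| := eig_mxnorm_le u_neq0 u_ortho M_sym Mu lam1_max.
have c_ge0 : 0 <= eps * (eps + 2 * `|lam1|).
  by rewrite mulr_ge0 ?addr_ge0 ?mulr_ge0 ?spectral_norm_ge0.
have E_norm := mxnorm_le_sqrD (normr_ge0 lam1) (spectral_norm_ge0 H) M_norm
  (sym_mxnorm_le_spectral_norm H_sym).
have sqr_Mu j := mulmx_sqr_eig (Mu j).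
have sqr_MHv j := mulmx_sqr_eig (MHv j).
split.
  exact: eig_perturb_le u_neq0 v_neq0 u_ortho v_ortho (trmx_sqr M_sym)
    (trmx_sqr MH_sym) sqr_Mu sqr_MHv c_ge0 E_norm i
    (sqr_dec_le lam_dec) (sqr_dec_le nu_dec).
move=> gap_gt0; apply: (sin_angle_eig_le u_neq0 v_neq0 v_ortho (trmx_sqr MH_sym)
  sqr_Mu sqr_MHv c_ge0 E_norm gap_gt0) => j ji.
exact: bigmin_le_cond.
Qed.
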